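(* Let $n,q$ be positive integers and $s_1,\dots,s_q\ge0$ integers with $\frac{q(q+1)}{2}+\sum_{k=1}^q k\,s_k=n$. Define $\overline{\alpha}_i=q-i+1+\sum_{k=i}^q s_k$ for $1\le i\le q$. Then: (1) $\overline{\alpha}=(\overline{\alpha}_1,\dots,\overline{\alpha}_q)\in\mathcal{P}(n)$; (2) $\overline{\alpha}_1>\overline{\alpha}_2>\cdots>\overline{\alpha}_q$; (3) $\delta(\overline{\alpha})=\big(1,2,\dots,q-1,q,q^{(s_q)},(q-1)^{(s_{q-1})},\dots,1^{(s_1)}\big)$; (4) $s_i=\overline{\alpha}_i-\overline{\alpha}_{i+1}-1$ for $1\le i\le q-1$, and $s_q=\overline{\alpha}_q-1$.
   Context: A partition of a positive integer $n$ is a finite non-increasing sequence $\alpha=(\alpha_1,\dots,\alpha_l)$ of positive integers with sum $n$; $\mathcal{P}(n)$ is the set of partitions of $n$, and $\alpha_i=0$ for $i>l$. The diagonal sequence is $\delta(\alpha)=(d_k)_{k\ge1}$ with $d_k=|\{i:1\le i\le k,\ \alpha_i+i-1\ge k\}|$, trailing zeros omitted. The notation $j^{(s)}$ denotes $s$ consecutive entries equal to $j$. *)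

From mathcomp Require Import all_boot.
Set Implicit Arguments. Unset Strict Implicit. Unset Printing Implicit Defensive.

(* A partition is represented as a seq nat (alpha_1, ..., alpha_l);
   alpha_i (1-indexed) is [nth 0 a i.-1], which is 0 for i > l. *)
Definition is_partition (n : nat) (a : seq nat) : bool :=
  [&& sorted geq a, all (fun x => 0 < x) a & sumn a == n].

Definition part_entry (a : seq nat) (i : nat) : nat := nth 0 a i.-1.

Definition diag_entry (a : seq nat) (k : nat) : nat :=
  count (fun i => k <= part_entry a i + i - 1) (iota 1 k).

Definition alphabar (q : nat) (s : nat -> nat) : seq nat :=
  [seq q - i + 1 + \sum_(i <= k < q.+1) s k | i <- iota 1 q].

Definition delta_target (q : nat) (s : nat -> nat) : seq nat :=
  iota 1 q ++ flatten [seq nseq (s j) j | j <- rev (iota 1 q)].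

(* The entries of [alphabar] are [q - i + 1 + S_i] with the tail sums
   [S_i = s_i + ... + s_q]; these decrease in [i], and the gap between two
   consecutive entries is [s_i + 1].  Summing, [sum_i (q - i + 1)] is the
   triangular number and [sum_i S_i = sum_k k s_k].  For the diagonal
   sequence, [alphabar_i + i - 1 = q + S_i], so [d_k = k] for [k <= q], while
   for [k > q] the count [d_k = #{i | k - q <= S_i}] is exactly the value at
   position [k - q - 1] of the block sequence [q^(s_q), ..., 1^(s_1)]. *)

From mathcomp Require Import all_boot zify.

Definition tailsum (q : nat) (s : nat -> nat) (i : nat) : nat :=
  \sum_(i <= k < q.+1) s k.

Section TailSums.

Variables (q : nat) (s : nat -> nat).

Lemma tailsum_gt i : q < i -> tailsum q s i = 0.
Proof. by move=> lt_q_i; rewrite /tailsum big_geq. Qed.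

Lemma tailsum_ltn i : i <= q -> tailsum q s i = s i + tailsum q s i.+1.
Proof. by move=> le_i_q; rewrite /tailsum big_ltn. Qed.

Lemma tailsumS i : i <= q.+1 -> tailsum q.+1 s i = tailsum q s i + s q.+1.
Proof. by move=> le_i_q1; rewrite /tailsum big_nat_recr. Qed.

Lemma tailsum_antitone {i j} : i <= j -> tailsum q s j <= tailsum q s i.
Proof.
move=> le_ij; case: (leqP j q.+1) => [le_j_q1 | lt_q1_j].
  by rewrite /tailsum (big_cat_nat le_ij le_j_q1) leq_addl.
by rewrite tailsum_gt //; apply: ltnW.
Qed.

End TailSums.

Lemma sum_tailsum q s :
  \sum_(1 <= i < q.+1) tailsum q s i = \sum_(1 <= k < q.+1) k * s k.
Proof.
elim: q => [|q IH]; first by rewrite !big_geq.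
rewrite big_nat_recr //= [RHS]big_nat_recr //= -IH.
rewrite (@eq_big_nat _ _ _ 1 q.+1 _ (fun i => tailsum q s i + s q.+1)); last first.
  by move=> i /andP[_ lt_i_q1]; rewrite tailsumS // ltnW.
by rewrite big_split sum_nat_const_nat /= tailsumS // tailsum_gt // mulSn; lia.
Qed.

Lemma sum_staircase q : \sum_(1 <= i < q.+1) (q - i + 1) = (q * q.+1)./2.
Proof.
rewrite big_nat_rev /= (@eq_big_nat _ _ _ 1 q.+1 _ id); last first.
  by move=> i /andP[le_1i lt_i_q1]; lia.
have := bin2_sum q.+1; rewrite big_ltn // add0n => ->.
by rewrite bin2 mulnC.
Qed.

(* The block [j^(s_j)] occupies the positions [S_(j+1) <= m < S_j], and there
   [j = #{i <= j} = #{i | m < S_i}]. *)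
Lemma nth_flatten_blocks q s m :
  nth 0 (flatten [seq nseq (s j) j | j <- rev (iota 1 q)]) m
  = count (fun i => m < tailsum q s i) (iota 1 q).
Proof.
elim: q m => [|q IH] m; first by rewrite nth_nil.
have -> : iota 1 q.+1 = iota 1 q ++ [:: q.+1] by rewrite -[q.+1]addn1 iotaD add1n addn1.
rewrite rev_cat /= nth_cat size_nseq count_cat /=.
rewrite tailsumS // tailsum_gt // add0n addn0.
case: ltnP => [lt_m_sq1 | le_sq1_m].
  rewrite nth_nseq lt_m_sq1 (eq_in_count (a2 := predT)); last first.
    by move=> i; rewrite mem_iota => /andP[_ lt_i]; rewrite /= tailsumS; lia.
  by rewrite count_predT size_iota addn1.
rewrite addn0 IH; apply: eq_in_count => i; rewrite mem_iota => /andP[_ lt_i] /=.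
rewrite tailsumS; lia.
Qed.

Section Alphabar.

Variables (q : nat) (s : nat -> nat).

Local Notation a := (alphabar q s).

Lemma part_entry_alphabar i :
  1 <= i <= q -> part_entry a i = q - i + 1 + tailsum q s i.
Proof.
move=> /andP[le_1i le_iq].
rewrite /part_entry /alphabar (nth_map 0); last by rewrite size_iota; lia.
by rewrite nth_iota 1?add1n ?prednK //; lia.
Qed.

Lemma part_entry_alphabar_gt i : q < i -> part_entry a i = 0.
Proof.
by move=> lt_qi; rewrite /part_entry nth_default // size_map size_iota; lia.
Qed.

Lemma hook_alphabar i : 1 <= i <= q -> part_entry a i + i - 1 = q + tailsum q s i.
Proof. by move=> le_1iq; rewrite part_entry_alphabar //; lia. Qed.

Lemma alphabar_decreasing : sorted (fun x y => y < x) a.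
Proof.
apply: (homo_sorted_in (P := [pred i | i <= q])) (iota_ltn_sorted 1 q); last first.
  by apply/allP => i; rewrite mem_iota inE; lia.
move=> i j; rewrite !inE => le_iq le_jq lt_ij.
have := tailsum_antitone q s (ltnW lt_ij); rewrite /tailsum; lia.
Qed.

Lemma sumn_alphabar : sumn a = (q * q.+1)./2 + \sum_(1 <= k < q.+1) k * s k.
Proof.
rewrite -sum_staircase -sum_tailsum -big_split /= sumnE big_map.
by rewrite /index_iota subn1.
Qed.

Lemma alphabar_partition : is_partition ((q * q.+1)./2 + \sum_(1 <= k < q.+1) k * s k) a.
Proof.
apply/and3P; split; last by rewrite sumn_alphabar.
  by apply: sub_sorted alphabar_decreasing => x y /ltnW.
by apply/allP => x /mapP[i _ ->]; rewrite addn1.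
Qed.

Lemma diag_entry_alphabar k : 0 < k -> diag_entry a k = nth 0 (delta_target q s) k.-1.
Proof.
move=> k_gt0; rewrite /diag_entry /delta_target nth_cat size_iota.
case: (leqP k q) => [le_kq | lt_qk].
  have lt_k1_q : k.-1 < q by lia.
  rewrite lt_k1_q nth_iota // (eq_in_count (a2 := predT)) ?count_predT ?size_iota.
    by rewrite add1n prednK.
  by move=> i; rewrite mem_iota => le_1ik /=; rewrite hook_alphabar; lia.
rewrite ifF; last by lia.
rewrite nth_flatten_blocks -(subnKC (ltnW lt_qk)) iotaD count_cat.
rewrite [X in _ + X](eq_in_count (a2 := pred0)); last first.
  by move=> i; rewrite mem_iota => lt_qi /=; rewrite part_entry_alphabar_gt; lia.
rewrite count_pred0 addn0; apply: eq_in_count => i; rewrite mem_iota => le_1iq /=.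
rewrite hook_alphabar; lia.
Qed.

Lemma alphabar_gap i : 1 <= i < q -> s i = part_entry a i - part_entry a i.+1 - 1.
Proof.
move=> /andP[le_1i lt_iq].
rewrite !part_entry_alphabar ?le_1i ?lt_iq ?(ltnW lt_iq) // (tailsum_ltn q s i (ltnW lt_iq)).
lia.
Qed.

Lemma alphabar_last : 0 < q -> s q = part_entry a q - 1.
Proof.
move=> q_gt0; rewrite part_entry_alphabar ?q_gt0 ?leqnn // tailsum_ltn // tailsum_gt //.
lia.
Qed.

End Alphabar.

Theorem proposition2p3 (n q : nat) (s : nat -> nat) :
  0 < n -> 0 < q ->
  (q * q.+1)./2 + \sum_(1 <= k < q.+1) k * s k = n ->
  [/\ is_partition n (alphabar q s),
      sorted (fun x y => y < x) (alphabar q s),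
      (forall k, 0 < k ->
         diag_entry (alphabar q s) k = nth 0 (delta_target q s) k.-1),
      (forall i, 1 <= i < q ->
         s i = part_entry (alphabar q s) i
               - part_entry (alphabar q s) i.+1 - 1)
    & s q = part_entry (alphabar q s) q - 1].
Proof.
move=> _ q_gt0 <-; split.
- exact: alphabar_partition.
- exact: alphabar_decreasing.
- exact: diag_entry_alphabar.
- exact: alphabar_gap.
- exact: alphabar_last.
Qed.
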